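(* Let $f$ be a DNF with $k$ terms and let $y\in\{0,1\}^n$ satisfy $f_{>\tau}$ and not $f_{\le\tau}$ ($\tau=1000k$). Fix any permutation $\pi$ and let $z_0,z_1,\dots$ be the sweep process started at $y$. Let $i$ be such that $(z_i)_a=y_a$ for all $a\in P(y)$, and let $U_i$ be the set of unanimous indices of $\mathcal{T}_f(z_i)$. If $\mathcal{T}_f(z_i)\setminus(P(y)\cup U_i)$ contains a stripped term of length at most $k$, then $\textsc{GenerateCandidateStem}(f,z_i)$ outputs a valid stem of a term of $f$ satisfied by $y$.
   Context: Terms are sets of literals, a DNF is a set of terms; $|T|$ is the number of literals; $g_{\le L}$ / $g_{>L}$ are the sub-DNFs of terms of length $\le L$ / $>L$. $\mathcal{T}_f(x)$ is the set of terms of $f$ satisfied by $x$. A term $T'$ is a valid stem of a term $T$ if $T'\subseteq T$ and $|T\setminus T'|\le 2k$. Protected set $P(y)$: for each term $T\in f$ not satisfied by $y$, take the literal of $T$ with smallest index not satisfied by $y$; $P(y)$ is the set of these indices. For a term $T$ and $S\subseteq[n]$, the stripped term $T\setminus S$ removes from $T$ all literals $x_i,\overline{x_i}$ with $i\in S$; for a set of terms, stripping is applied to each. Unanimous indices of a set of terms $\mathcal{T}$: all $i$ such that every term of $\mathcal{T}$ contains $x_i$, or every term contains $\overline{x_i}$. $x^{\oplus j}$ is $x$ with bit $j$ flipped. $\textsc{GenerateCandidateStem}(f,x)$: let $I=\{i: f(x^{\oplus i})=0\}$ and output the term $\{x_i:i\in I,x_i=1\}\cup\{\overline{x_i}: i\in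 I, x_i=0\}$. Sweep process: given $y$ with $f(y)=1$ and a permutation $\pi$ listing $[n]$ as $\pi(0),\dots,\pi(n-1)$, $z_0=y$, and $z_{t+1}=z_t^{\oplus\pi(t)}$ if $f(z_t^{\oplus\pi(t)})=1$, else $z_{t+1}=z_t$. *)

From mathcomp Require Import all_boot all_order perm.
Set Implicit Arguments. Unset Strict Implicit. Unset Printing Implicit Defensive.

(* Assignments x in {0,1}^n, literals (i, b) meaning x_i (b = true) or
   ~x_i (b = false), terms = finite sets of literals, DNFs = sets of terms. *)
Definition assign (n : nat) := {ffun 'I_n -> bool}.
Definition lit (n : nat) := ('I_n * bool)%type.
Definition term (n : nat) := {set lit n}.
Definition dnf (n : nat) := {set term n}.

Section DNF.
Variable n : nat.

Definition lit_sat (x : assign n) (l : lit n) : bool := x l.1 == l.2.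
Definition term_sat (x : assign n) (T : term n) : bool :=
  [forall l in T, lit_sat x l].
Definition eval (f : dnf n) (x : assign n) : bool :=
  [exists T in f, term_sat x T].

Definition dnf_le (g : dnf n) (L : nat) : dnf n := [set T in g | #|T| <= L].
Definition dnf_gt (g : dnf n) (L : nat) : dnf n := [set T in g | L < #|T|].

Definition sat_terms (f : dnf n) (x : assign n) : {set term n} :=
  [set T in f | term_sat x T].

Definition valid_stem (k : nat) (T' T : term n) : bool :=
  (T' \subset T) && (#|T :\: T'| <= 2 * k).

Definition protected_set (f : dnf n) (y : assign n) : {set 'I_n} :=
  [set i : 'I_n | [exists T in f, ~~ term_sat y T &&
     [exists b : bool, ((i, b) \in T) && ~~ lit_sat y (i, b)] &&
     [forall l in T, ~~ lit_sat y l ==> (i <= l.1)%N]]].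

Definition strip (T : term n) (S : {set 'I_n}) : term n :=
  [set l in T | l.1 \notin S].

Definition unanimous (Ts : {set term n}) : {set 'I_n} :=
  [set i : 'I_n | [forall T in Ts, (i, true) \in T] ||
                  [forall T in Ts, (i, false) \in T]].

Definition flip (x : assign n) (j : 'I_n) : assign n :=
  [ffun a => if a == j then ~~ x a else x a].

Definition generate_candidate_stem (f : dnf n) (x : assign n) : term n :=
  [set l : lit n | ~~ eval f (flip x l.1) && (l.2 == x l.1)].

(* one step of the sweep process, at time t (no-op for t >= n) *)
Definition sweep_step (f : dnf n) (pi : {perm 'I_n}) (t : nat) (z : assign n)
  : assign n :=
  if insub t is Some o then
    (if eval f (flip z (pi o)) then flip z (pi o) else z)
  else z.

Fixpoint sweep (f : dnf n) (pi : {perm 'I_n}) (y : assign n) (t : nat)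
  : assign n :=
  match t with
  | 0 => y
  | t'.+1 => sweep_step f pi t' (sweep f pi y t')
  end.

End DNF.

From mathcomp Require Import all_boot all_order perm.
Set Implicit Arguments. Unset Strict Implicit. Unset Printing Implicit Defensive.

(* Write z for z_i.  A term falsified by y is falsified by z at its protected
   index, so every term satisfied by z, in particular the given term T, is
   satisfied by y.  A literal of z is in the candidate stem iff flipping its
   bit falsifies f; such a literal lies in T, for otherwise T survives the flip.
   A literal of T missing from the stem is either in the stripped part of T
   (at most k of them) or sits at an index j in P(y) or U_i with f(z^j) = 1.
   Charge such a j to a term of f falsified by z: the term that j protects, or
   a term made true by flipping j, which is false at z because j is unanimous.
   No term is charged twice, so T loses at most 2k literals. *)

Lemma card_le_rel (I J : finType) (A : {set I}) (F : {set J}) (R : I -> J -> bool) :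
  (forall i, i \in A -> exists2 t, t \in F & R i t) ->
  (forall i1 i2 t, R i1 t -> R i2 t -> i1 = i2) ->
  #|A| <= #|F|.
Proof.
move=> exR uniqR.
pose g i := [pick t in F | R i t].
have gP i : i \in A -> {t | g i = Some t & (t \in F) && R i t}.
  move=> /exR exRi; rewrite /g; case: pickP => [t Rt|none]; first by exists t.
  by exfalso; case: exRi => t tF Rt; move: (none t); rewrite tF Rt.
have g_inj : {in A &, injective g}.
  move=> i1 i2 /gP[t1 -> /andP[_ R1]] /gP[t2 -> /andP[_ R2]] [e].
  by apply: (uniqR _ _ t1); rewrite // e.
rewrite -(card_in_imset g_inj) -(card_imset F (@Some_inj _)).
apply/subset_leq_card/subsetP => _ /imsetP[i /gP[t -> /andP[tF _]] ->].
exact: imset_f.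
Qed.

Section Literals.
Variable n : nat.
Implicit Types (x : assign n) (l : lit n) (T : term n) (j : 'I_n).

Lemma lit_sat_flip x j l :
  lit_sat (flip x j) l = if l.1 == j then ~~ lit_sat x l else lit_sat x l.
Proof. by rewrite /lit_sat ffunE; case: ifP => // _; case: (x l.1); case: l.2. Qed.

Lemma sat_lit_inj x l l' : lit_sat x l -> lit_sat x l' -> l.1 = l'.1 -> l = l'.
Proof. by case: l l' => [a b] [a' b'] /eqP /= <- /eqP /= <- /= ->. Qed.

Lemma flip_sat_idx x j l : lit_sat (flip x j) l -> ~~ lit_sat x l -> l.1 = j.
Proof. by rewrite lit_sat_flip; case: eqP => // _ ->. Qed.

Lemma term_sat_flip x j T :
  term_sat x T -> (forall l, l \in T -> l.1 != j) -> term_sat (flip x j) T.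
Proof.
move=> /forall_inP xT Tj; apply/forall_inP => l lT.
by rewrite lit_sat_flip (negPf (Tj l lT)) xT.
Qed.

Lemma term_sat_flip_idx x j b T :
  term_sat x T -> term_sat (flip x j) T -> (j, b) \notin T.
Proof.
move=> /forall_inP xT /forall_inP fxT; apply/negP => jT.
by move: (fxT _ jT); rewrite lit_sat_flip eqxx xT.
Qed.

Definition falsified_at x j T : bool :=
  [exists b, ((j, b) \in T) && ~~ lit_sat x (j, b)].

Definition protects x j T : bool :=
  falsified_at x j T && [forall l in T, ~~ lit_sat x l ==> (j <= l.1)%N].

Definition only_falsified_at x j T : bool :=
  falsified_at x j T && [forall l in T, ~~ lit_sat x l ==> (l.1 == j)].

Lemma falsified_at_agree x x' j T :
  x j = x' j -> falsified_at x j T = falsified_at x' j T.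
Proof. by rewrite /falsified_at /lit_sat /= => ->. Qed.

Lemma falsified_at_term_sat x j T : falsified_at x j T -> ~~ term_sat x T.
Proof. by case/existsP=> b /andP[jT nsat]; apply/forallPn; exists (j, b); rewrite jT. Qed.

Lemma falsified_lit x l T : l \in T -> ~~ lit_sat x l -> falsified_at x l.1 T.
Proof. by move=> lT nsat; apply/existsP; exists l.2; rewrite -surjective_pairing lT. Qed.

Lemma exists_protects x T : ~~ term_sat x T -> exists j, protects x j T.
Proof.
case/forallPn=> l0; rewrite negb_imply => /andP[l0T nsat0].
have [l /andP[lT nsat] lmin] :=
  @arg_minnP _ l0 [pred l | (l \in T) && ~~ lit_sat x l] (fun l => val l.1)
    (introT andP (conj l0T nsat0)).
exists l.1; rewrite /protects (falsified_lit lT nsat).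
by apply/forall_inP => l' l'T; apply/implyP => nsat'; apply: lmin; rewrite /= l'T.
Qed.

Lemma protects_inj x j1 j2 T : protects x j1 T -> protects x j2 T -> j1 = j2.
Proof.
case/andP=> /existsP[b1 /andP[T1 n1]] /forall_inP min1.
case/andP=> /existsP[b2 /andP[T2 n2]] /forall_inP min2.
by apply/val_inj/eqP; rewrite eqn_leq (implyP (min1 _ T2) n2) (implyP (min2 _ T1) n1).
Qed.

Lemma only_falsified_at_idx x j j' T :
  only_falsified_at x j T -> falsified_at x j' T -> j' = j.
Proof.
by case/andP=> _ /forall_inP only /existsP[b /andP[jT nsat]]; apply/eqP/(implyP (only _ jT)).
Qed.

Lemma mem_protected_set (f : dnf n) y j :
  (j \in protected_set f y) = [exists T in f, protects y j T].
Proof.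
rewrite inE; apply: eq_existsb => T; congr (_ && (_ && _)).
exact/andb_idl/falsified_at_term_sat.
Qed.

Lemma unanimous_lit (Ts : {set term n}) j T :
  j \in unanimous Ts -> T \in Ts -> exists b, (j, b) \in T.
Proof.
by rewrite inE => /orP[] /forall_inP jTs /jTs jT; [exists true | exists false].
Qed.

Lemma candidate_stem_sub (f : dnf n) z T :
  T \in sat_terms f z -> generate_candidate_stem f z \subset T.
Proof.
rewrite inE => /andP[Tf zT]; apply/subsetP => l; rewrite inE => /andP[nflip zl].
apply: contraR nflip => lT; apply/existsP; exists T; rewrite Tf.
apply: term_sat_flip => // l' l'T; apply: contraNneq lT => idx.
by rewrite -(sat_lit_inj (forall_inP zT _ l'T) _ idx) // /lit_sat eq_sym.
Qed.

End Literals.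

Section Charging.
Variables (n : nat) (f : dnf n) (y z : assign n).
Hypothesis z_agrees : forall a, a \in protected_set f y -> z a = y a.

Definition charged (j : 'I_n) (T : term n) : bool :=
  (protects y j T && falsified_at z j T) || only_falsified_at z j T.

Lemma charged_inj j1 j2 T : charged j1 T -> charged j2 T -> j1 = j2.
Proof.
case/orP=> [/andP[p1 f1] | o1]; case/orP=> [/andP[p2 f2] | o2].
- exact: protects_inj p1 p2.
- exact: only_falsified_at_idx o2 f1.
- exact/esym/(only_falsified_at_idx o1 f2).
- by apply/esym/(only_falsified_at_idx o1); case/andP: o2.
Qed.

Lemma protects_falsified_at j T :
  j \in protected_set f y -> protects y j T -> falsified_at z j T.
Proof. by move=> jP /andP[yT _]; rewrite (falsified_at_agree _ (z_agrees jP)). Qed.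

Lemma protected_charged j :
  j \in protected_set f y -> exists2 T, T \in f & charged j T.
Proof.
move=> jP; have := jP; rewrite mem_protected_set => /exists_inP[T Tf pT].
by exists T; rewrite // /charged pT (protects_falsified_at jP pT).
Qed.

Lemma unanimous_flip_charged j :
  j \in unanimous (sat_terms f z) -> eval f (flip z j) ->
  exists2 T, T \in f & charged j T.
Proof.
move=> jU /exists_inP[T Tf flipT]; exists T => //.
have nzT : ~~ term_sat z T.
  apply/negP => zT; have [b jT] := unanimous_lit jU (introT setIdP (conj Tf zT)).
  by move: jT; rewrite (negPf (term_sat_flip_idx b zT flipT)).
have [l lT nsat] : exists2 l, l \in T & ~~ lit_sat z l.
  by case/forallPn: nzT => l; rewrite negb_imply => /andP[]; exists l.
have idx := flip_sat_idx (forall_inP flipT _ lT) nsat.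
apply/orP; right; rewrite /only_falsified_at -idx (falsified_lit lT nsat) idx.
apply/forall_inP => l' l'T; apply/implyP => nsat'.
exact/eqP/(flip_sat_idx (forall_inP flipT _ l'T) nsat').
Qed.

Lemma sat_terms_sat T : T \in sat_terms f z -> term_sat y T.
Proof.
rewrite inE => /andP[Tf zT]; apply: contraTT zT => /exists_protects[j pT].
have jP : j \in protected_set f y by rewrite mem_protected_set; apply/exists_inP; exists T.
exact: falsified_at_term_sat (protects_falsified_at jP pT).
Qed.

Let B := [set j in protected_set f y :|: unanimous (sat_terms f z)
               | eval f (flip z j)].

Lemma card_flip_sat_le : #|B| <= #|f|.
Proof.
apply: card_le_rel charged_inj => j; rewrite in_set in_setU.
case/andP=> /orP[jP | jU] flip_sat; first exact: protected_charged.
exact: unanimous_flip_charged.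
Qed.

Lemma card_candidate_stem_diff T :
  T \in sat_terms f z ->
  #|T :\: generate_candidate_stem f z|
    <= #|strip T (protected_set f y :|: unanimous (sat_terms f z))| + #|B|.
Proof.
move=> Tz; have /setIdP[_ /forall_inP zT] := Tz.
set S := [set l in T | l.1 \in B].
have cover : T :\: generate_candidate_stem f z
               \subset strip T (protected_set f y :|: unanimous (sat_terms f z)) :|: S.
  apply/subsetP => l /setDP[lT nG]; apply/setUP.
  case PUl: (l.1 \in protected_set f y :|: unanimous (sat_terms f z)); last first.
    by left; rewrite in_set lT PUl.
  right; rewrite in_set lT in_set PUl /=.
  move: nG; rewrite in_set negb_and negbK => /orP[] // neq.
  by move: (zT _ lT); rewrite /lit_sat eq_sym (negPf neq).
have card_S : #|S| <= #|B|.
  have idx_inj : {in S &, injective (fun l : lit n => l.1)}.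
    by move=> l l' /setIdP[lT _] /setIdP[l'T _]; apply: sat_lit_inj (zT _ lT) (zT _ l'T).
  rewrite -(card_in_imset idx_inj); apply/subset_leq_card/subsetP.
  by move=> j /imsetP[l /setIdP[_ lB] ->].
apply: leq_trans (subset_leq_card cover) _.
by apply: leq_trans (leq_card_setU _ _) _; rewrite leq_add2l.
Qed.

Lemma candidate_stem_valid T :
  T \in sat_terms f z ->
  #|strip T (protected_set f y :|: unanimous (sat_terms f z))| <= #|f| ->
  (T \in f) && term_sat y T && valid_stem #|f| (generate_candidate_stem f z) T.
Proof.
move=> Tz short; have /setIdP[-> _] := Tz; rewrite sat_terms_sat //=.
rewrite /valid_stem candidate_stem_sub //= mul2n -addnn.
apply: leq_trans (card_candidate_stem_diff Tz) _.
by rewrite leq_add // card_flip_sat_le.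
Qed.

End Charging.

Theorem lemma4p11 (n k : nat) (f : dnf n) (y : assign n) (pi : {perm 'I_n})
  (i : nat) :
  #|f| = k ->
  eval (dnf_gt f (1000 * k)) y ->
  ~~ eval (dnf_le f (1000 * k)) y ->
  (i <= n)%N ->
  (forall a, a \in protected_set f y -> sweep f pi y i a = y a) ->
  (exists2 T, T \in sat_terms f (sweep f pi y i) &
     (#|strip T (protected_set f y :|: unanimous (sat_terms f (sweep f pi y i)))|
        <= k)%N) ->
  exists2 T, (T \in f) && term_sat y T &
    valid_stem k (generate_candidate_stem f (sweep f pi y i)) T.
Proof.
move=> <- _ _ _ z_agrees [T Tz short].
by case/andP: (candidate_stem_valid z_agrees Tz short) => TyT stem; exists T.
Qed.
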